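(* Under the CRFE, $(\hat{\boldsymbol{\tau}}'-\boldsymbol{\tau}',\hat{\boldsymbol{\theta}}_x')'$ has mean zero, and for $1\le h\le H$, $\mathrm{Cov}(\hat{\boldsymbol{\tau}}-\boldsymbol{\tau},\hat{\boldsymbol{\theta}}_x[h])=\boldsymbol{W}_{\tau x}[h]=2^{-2(K-1)}\sum_{q=1}^Qn_q^{-1}(\boldsymbol{b}_q\boldsymbol{c}_q[h]')\otimes\boldsymbol{S}_{q,x}$, $\mathrm{Cov}(\hat{\boldsymbol{\theta}}_x[h])=\boldsymbol{W}_{xx}[h]=2^{-2(K-1)}\sum_{q=1}^Qn_q^{-1}(\boldsymbol{c}_q[h]\boldsymbol{c}_q[h]')\otimes\boldsymbol{S}_{xx}$, and $\mathrm{Cov}(\hat{\boldsymbol{\theta}}_x[h],\hat{\boldsymbol{\theta}}_x[\tilde h])=\boldsymbol{0}$ for $h\ne\tilde h$.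
   Context: Setup ($2^K$ factorial experiment, finite population). $K\ge1$ two-level factors, $Q=2^K$ treatment combinations $q=1,\dots,Q$; combination $q$ sets factor $k$ at $\iota_k(q)\in\{-1,+1\}$, bijectively onto $\{-1,+1\}^K$. $F=Q-1$ factorial effects, one per nonempty $A\subseteq\{1,\dots,K\}$, enumerated $f=1,\dots,F$, with $g_{fq}=\prod_{k\in A}\iota_k(q)$; $\boldsymbol{b}_q=(g_{1q},\dots,g_{Fq})'$. Units $i=1,\dots,n$ have fixed potential outcomes $Y_i(q)$ and covariates $\boldsymbol{x}_i\in\mathbb{R}^L$; $\bar Y(q),\bar{\boldsymbol{x}}$ means; $\boldsymbol{\tau}=2^{-(K-1)}\sum_q\boldsymbol{b}_q\bar Y(q)$. Finite-population (co)variances with divisor $n-1$: $\boldsymbol{S}_{xx}$ of $\boldsymbol{x}$; $\boldsymbol{S}_{q,x}$ between $Y(q)$ and $\boldsymbol{x}$. CRFE: fixed $n_q\ge1$, $\sum n_q=n$; $\boldsymbol{Z}$ uniform over assignments with $n_q$ units in combination $q$; $\hat{\bar Y}(q),\hat{\bar{\boldsymbol{x}}}(q)$ group-$q$ means of observed outcomes $Y_i(Z_i)$ and covariates; $\hat{\boldsymbol{\tau}}=2^{-(K-1)}\sum_q\boldsymbol{b}_q\hat{\bar Y}(q)$. Tiers: partition $\{1,\dots,F\}$ into disjoint nonempty $\mathcal{F}_1,\dots,\mathcal{F}_H$, $\mathcal{F}_{\overline h}=\bigcup_{l\le h}\mathcal{F}_l$. $\tilde{\boldsymbol{B}}=2^{-2(K-1)}\sum_qn_q^{-1}\boldsymbol{b}_q\boldsymbol{b}_q'$;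 $\boldsymbol{b}_q[\mathcal{I}]$ is the subvector with indices in $\mathcal{I}$ and $\tilde{\boldsymbol{B}}[\mathcal{I},\mathcal{J}]$ the submatrix. $\boldsymbol{c}_q[1]=\boldsymbol{b}_q[\mathcal{F}_1]$, and for $h\ge2$, $\boldsymbol{c}_q[h]=\boldsymbol{b}_q[\mathcal{F}_h]-\tilde{\boldsymbol{B}}[\mathcal{F}_h,\mathcal{F}_{\overline{h-1}}]\{\tilde{\boldsymbol{B}}[\mathcal{F}_{\overline{h-1}},\mathcal{F}_{\overline{h-1}}]\}^{-1}\boldsymbol{b}_q[\mathcal{F}_{\overline{h-1}}]$. $\hat{\boldsymbol{\theta}}_x[h]=2^{-(K-1)}\sum_q\boldsymbol{c}_q[h]\otimes\hat{\bar{\boldsymbol{x}}}(q)$ and $\hat{\boldsymbol{\theta}}_x=(\hat{\boldsymbol{\theta}}_x[1]',\dots,\hat{\boldsymbol{\theta}}_x[H]')'$. *)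

From HB Require Import structures.
From mathcomp Require Import all_boot all_order all_algebra.
From mathcomp Require Import mxtens.
Set Implicit Arguments. Unset Strict Implicit. Unset Printing Implicit Defensive.
Import Order.TTheory GRing.Theory Num.Theory.
Local Open Scope ring_scope.

Definition Ex (R : realFieldType) (T : finType) (A : {set T}) (m p : nat)
  (U : T -> 'M[R]_(m, p)) : 'M[R]_(m, p) :=
  (#|A|%:R)^-1 *: \sum_(Z in A) U Z.

Definition Cov (R : realFieldType) (T : finType) (A : {set T}) (m p : nat)
  (U : T -> 'cV[R]_m) (V : T -> 'cV[R]_p) : 'M[R]_(m, p) :=
  Ex A (fun Z => (U Z - Ex A U) *m (V Z - Ex A V)^T).

(* subvector v[I] (indices of I in increasing order) and submatrix M[I,J] *)
Definition subcol (R : Type) (F : nat) (I : {set 'I_F}) (v : 'cV[R]_F)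
  : 'cV[R]_#|I| := \col_(i < #|I|) v (enum_val i) ord0.
Definition subm (R : Type) (F : nat) (I J : {set 'I_F}) (M : 'M[R]_F)
  : 'M[R]_(#|I|, #|J|) := \matrix_(i < #|I|, j < #|J|) M (enum_val i) (enum_val j).

Section Factorial.
Variable R : realFieldType.
Variable K : nat.
Local Notation Q := (2 ^ K)%N.
Local Notation F := (2 ^ K).-1.

Definition lev (b : bool) : R := if b then 1 else -1.

Definition gfq (iota : 'I_Q -> 'I_K -> bool) (eff : 'I_F -> {set 'I_K})
  (f : 'I_F) (q : 'I_Q) : R := \prod_(k in eff f) lev (iota q k).

Definition bvec iota eff (q : 'I_Q) : 'cV[R]_F := \col_(f < F) gfq iota eff f q.

(* CRFE assignment set: Z_i = treatment of unit i, n_q units in group q *)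
Definition crfe (n : nat) (nq : 'I_Q -> nat) : {set {ffun 'I_n -> 'I_Q}} :=
  [set Z : {ffun 'I_n -> 'I_Q} | [forall q : 'I_Q, #|[set i : 'I_n | Z i == q]| == nq q]].

Variable n L : nat.
Variable Y : 'I_n -> 'I_Q -> R.          (* potential outcomes Y_i(q) *)
Variable x : 'I_n -> 'cV[R]_L.
Variable nq : 'I_Q -> nat.

Definition Ybar (q : 'I_Q) : R := (n%:R)^-1 * \sum_(i < n) Y i q.
Definition xbar : 'cV[R]_L := (n%:R)^-1 *: \sum_(i < n) x i.

Definition Sxx : 'M[R]_L :=
  ((n.-1)%:R)^-1 *: \sum_(i < n) (x i - xbar) *m (x i - xbar)^T.
Definition Sqx (q : 'I_Q) : 'M[R]_(1, L) :=
  ((n.-1)%:R)^-1 *: \sum_(i < n) ((Y i q - Ybar q) *: (x i - xbar)^T).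

Definition Yhat (Z : {ffun 'I_n -> 'I_Q}) (q : 'I_Q) : R :=
  ((nq q)%:R)^-1 * \sum_(i < n | Z i == q) Y i (Z i).
Definition xhat (Z : {ffun 'I_n -> 'I_Q}) (q : 'I_Q) : 'cV[R]_L :=
  ((nq q)%:R)^-1 *: \sum_(i < n | Z i == q) x i.

Variable iota : 'I_Q -> 'I_K -> bool.
Variable eff : 'I_F -> {set 'I_K}.

Definition tau : 'cV[R]_F :=
  (2%:R ^- K.-1) *: \sum_(q < Q) (Ybar q *: bvec iota eff q).
Definition tauhat (Z : {ffun 'I_n -> 'I_Q}) : 'cV[R]_F :=
  (2%:R ^- K.-1) *: \sum_(q < Q) (Yhat Z q *: bvec iota eff q).

Definition Btil : 'M[R]_F :=
  (2%:R ^- (2 * K.-1)%N) *: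
    \sum_(q < Q) (((nq q)%:R)^-1 *: (bvec iota eff q *m (bvec iota eff q)^T)).

Variable H : nat.
Variable tier : 'I_F -> 'I_H.           (* f belongs to tier F_{tier f} *)

Definition Ftier (h : 'I_H) : {set 'I_F} := [set f | tier f == h].
(* F_{\overline{h-1}} = union of the tiers strictly before h *)
Definition Fbefore (h : 'I_H) : {set 'I_F} := [set f | (tier f < h)%N].

Definition cvec (q : 'I_Q) (h : 'I_H) : 'cV[R]_#|Ftier h| :=
  if (val h == 0)%N then subcol (Ftier h) (bvec iota eff q)
  else subcol (Ftier h) (bvec iota eff q)
       - subm (Ftier h) (Fbefore h) Btil
         *m invmx (subm (Fbefore h) (Fbefore h) Btil)
         *m subcol (Fbefore h) (bvec iota eff q).

Definition thetahat (h : 'I_H) (Z : {ffun 'I_n -> 'I_Q})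
  : 'cV[R]_(#|Ftier h| * L) :=
  (2%:R ^- K.-1) *: \sum_(q < Q) tensmx (cvec q h) (xhat Z q).

Definition Wtx (h : 'I_H) : 'M[R]_(F * 1, #|Ftier h| * L) :=
  (2%:R ^- (2 * K.-1)%N) *:
    \sum_(q < Q) (((nq q)%:R)^-1 *: tensmx (bvec iota eff q *m (cvec q h)^T) (Sqx q)).

Definition Wxx (h : 'I_H) : 'M[R]_(#|Ftier h| * L, #|Ftier h| * L) :=
  (2%:R ^- (2 * K.-1)%N) *:
    \sum_(q < Q) (((nq q)%:R)^-1 *: tensmx (cvec q h *m (cvec q h)^T) Sxx).

End Factorial.

(* Every entry of [tauhat - tau] and of [thetahat h] is, up to an additive
   constant, a contrast [sum_q a_q * ghat(q)] of group means.  Complete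
   randomization is exchangeable in the units, so P(Z_i = q) = n_q / n and,
   for i <> j, P(Z_i = q, Z_j = q') = n_q (n_q' - [q = q']) / (n (n - 1)).
   Hence group means are unbiased, Cov(uhat(q), what(q')) equals
   ([q = q'] / n_q - 1 / n) S_uw, and if sum_q a'_q = 0 then the contrasts
   sum_q a_q u_qhat(q) and sum_q a'_q what(q) have covariance
   sum_q a_q a'_q S_{u_q w} / n_q.
   The coefficients of [thetahat h] do sum to zero: c_q[h] = P_h b_q for a
   fixed matrix P_h and sum_q b_q = 0.  Moreover sum_q b_q b_q' = Q I, so
   B~ is positive definite, and P_h v is the residual of v[F_h] after its
   B~-regression on v[F_{<h}] (a Schur complement).  The rows of P_h are thus
   B~-orthogonal to all vectors supported on F_{<h} while being supported on
   F_{<=h}, whence sum_q c_q[h] c_q[h']' / n_q = P_h B~ P_h'' = 0 for h <> h'. *)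

From HB Require Import structures.
From mathcomp Require Import all_boot all_order all_algebra all_fingroup.
From mathcomp Require Import mxtens ring.
Set Implicit Arguments. Unset Strict Implicit. Unset Printing Implicit Defensive.
Import Order.TTheory GRing.Theory Num.Theory.
Local Open Scope ring_scope.

Section Average.
Variables (R : realFieldType) (T : finType) (A : {set T}).

Definition avg (u : T -> R) : R := #|A|%:R^-1 * \sum_(Z in A) u Z.

Definition covar (u v : T -> R) : R :=
  avg (fun Z => (u Z - avg u) * (v Z - avg v)).

Lemma eq_avg u v : {in A, u =1 v} -> avg u = avg v.
Proof. by move=> eq_uv; rewrite /avg (eq_bigr _ eq_uv). Qed.

Lemma eq_covar u1 u2 v1 v2 :
  {in A, u1 =1 u2} -> {in A, v1 =1 v2} -> covar u1 v1 = covar u2 v2.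
Proof.
move=> eq_u eq_v; rewrite /covar (eq_avg eq_u) (eq_avg eq_v).
by apply: eq_avg => Z ZA; rewrite eq_u ?eq_v.
Qed.

Lemma avgD u v : avg (fun Z => u Z + v Z) = avg u + avg v.
Proof. by rewrite /avg big_split mulrDr. Qed.

Lemma avgZ c u : avg (fun Z => c * u Z) = c * avg u.
Proof. by rewrite /avg -mulr_sumr mulrCA. Qed.

Lemma avg_sum (I : Type) (r : seq I) (P : pred I) (u : I -> T -> R) :
  avg (fun Z => \sum_(i <- r | P i) u i Z) = \sum_(i <- r | P i) avg (u i).
Proof. by rewrite /avg exchange_big mulr_sumr. Qed.

Lemma ExE m p (U : T -> 'M[R]_(m, p)) i j : Ex A U i j = avg (fun Z => U Z i j).
Proof. by rewrite /Ex /avg mxE summxE. Qed.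

Lemma CovE m p (U : T -> 'cV[R]_m) (V : T -> 'cV[R]_p) i j :
  Cov A U V i j = covar (fun Z => U Z i 0) (fun Z => V Z j 0).
Proof.
rewrite /Cov ExE; apply: eq_avg => Z _.
by rewrite mxE big_ord1 !mxE !summxE.
Qed.

Lemma covarC u v : covar u v = covar v u.
Proof. by apply: eq_avg => Z _; rewrite mulrC. Qed.

Lemma covar_suml (I : Type) (r : seq I) (P : pred I) (a : I -> R) (u : I -> T -> R) v :
  covar (fun Z => \sum_(i <- r | P i) a i * u i Z) v
  = \sum_(i <- r | P i) a i * covar (u i) v.
Proof.
rewrite /covar (@eq_avg _ (fun Z =>
  \sum_(i <- r | P i) a i * ((u i Z - avg (u i)) * (v Z - avg v)))) => [|Z _].
  by rewrite avg_sum; apply: eq_bigr => i _; apply: avgZ.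
rewrite avg_sum; under [X in (_ - X) * _]eq_bigr do rewrite avgZ.
by rewrite -sumrB mulr_suml; apply: eq_bigr => i _; rewrite -mulrBr mulrA.
Qed.

Lemma covar_sumr (I : Type) (r : seq I) (P : pred I) (a : I -> R) u (v : I -> T -> R) :
  covar u (fun Z => \sum_(i <- r | P i) a i * v i Z)
  = \sum_(i <- r | P i) a i * covar u (v i).
Proof. by rewrite covarC covar_suml; apply: eq_bigr => i _; rewrite covarC. Qed.

Hypothesis A_gt0 : (0 < #|A|)%N.

Lemma avg_cst c : avg (fun=> c) = c.
Proof. by rewrite /avg sumr_const -[c *+ _]mulr_natl mulKf // pnatr_eq0 -lt0n. Qed.

Lemma covarDl_cst u v c : covar (fun Z => u Z + c) v = covar u v.
Proof.
rewrite /covar avgD avg_cst; apply: eq_avg => Z _.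
by rewrite opprD addrACA subrr addr0.
Qed.

End Average.

Lemma sum_mul_diag_offdiag (S : comPzRingType) (m : nat) (u w : 'I_m -> S) (a b : S) :
  \sum_i \sum_j u i * w j * (if i == j then a else b)
  = (a - b) * \sum_i u i * w i + b * (\sum_i u i) * (\sum_j w j).
Proof.
transitivity (\sum_i (u i * w i * (a - b) + b * u i * \sum_j w j)).
  apply: eq_bigr => i _; rewrite (bigD1 i) //= eqxx [in RHS](bigD1 i) //=.
  under eq_bigr => j nji do rewrite eq_sym (negPf nji) mulrAC.
  by rewrite -mulr_sumr; ring.
by rewrite big_split /= -!mulr_suml -mulr_sumr; ring.
Qed.

Lemma perm2_transitive (T : finType) (i j i' j' : T) :
  i != j -> i' != j' -> exists s : {perm T}, s i' = i /\ s j' = j.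
Proof.
move=> nij nij'; pose s := tperm i' i; pose t := tperm (s j') j.
have si' : s i' = i by rewrite tpermL.
have sj'_neq_i : s j' != i by rewrite -si' (inj_eq perm_inj) eq_sym.
by exists (s * t)%g; rewrite !permM si' tpermL tpermD // eq_sym.
Qed.

Section CompletelyRandomized.
Variables (R : realFieldType) (K n : nat) (nq : 'I_(2 ^ K) -> nat).
Local Notation Q := (2 ^ K)%N.
Local Notation T := {ffun 'I_n -> 'I_Q}.
Local Notation A := (crfe n nq).
Hypothesis nq_sum : (\sum_(q < Q) nq q)%N = n.

Definition assigned (q : 'I_Q) (i : 'I_n) (Z : T) : R := (Z i == q)%:R.

Lemma crfe_card_gt0 : (0 < #|A|)%N.
Proof.
pose q0 : 'I_Q := Ordinal (expn_gt0 2 K).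
(* Assign the units to the groups in consecutive blocks of sizes [nq q]. *)
pose s := flatten [seq nseq (nq q) q | q <- enum 'I_Q].
have size_s : size s = n.
  rewrite size_flatten /shape -map_comp -nq_sum sumnE big_map big_enum /=.
  by apply: eq_bigr => q _; rewrite /= size_nseq.
pose Z : T := [ffun i : 'I_n => nth q0 s i].
apply/card_gt0P; exists Z; rewrite inE; apply/forallP => q; apply/eqP.
have -> : #|[set i | Z i == q]| = count_mem q s.
  rewrite -sum1_count (big_nth q0) size_s big_mkord cardsE -sum1_card.
  by apply: eq_bigl => i; rewrite unfold_in /= ffunE.
rewrite count_flatten -map_comp sumnE big_map big_enum /= (bigD1 q) //=.
rewrite count_nseq /= eqxx mul1n big1 ?addn0 // => q' /negPf.
by rewrite count_nseq /= eq_sym => ->.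
Qed.

Lemma sum_assigned q Z : Z \in A -> \sum_i assigned q i Z = (nq q)%:R.
Proof.
rewrite inE => /forallP /(_ q) /eqP <-.
rewrite cardsE -sum1_card natr_sum [RHS]big_mkcond /=.
apply: eq_bigr => i _; rewrite unfold_in /=; change (eqn (Z i) q) with (Z i == q).
by rewrite /assigned; case: (Z i == q).
Qed.

Lemma avg_crfe_perm (s : {perm 'I_n}) (u : T -> R) :
  avg A u = avg A (fun Z => u [ffun i => Z (s i)]).
Proof.
pose h (Z : T) : T := [ffun i => Z (s i)].
pose h' (Z : T) : T := [ffun i => Z ((s^-1)%g i)].
have hK : cancel h h' by move=> Z; apply/ffunP => i; rewrite !ffunE permKV.
have h'K : cancel h' h by move=> Z; apply/ffunP => i; rewrite !ffunE permK.
rewrite /avg (reindex h) /=; last by apply: onW_bij; exists h'.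
congr (_ * _); apply: eq_bigl => Z; rewrite !inE; apply: eq_forallb => q.
suff -> : [set i | h Z i == q] = s @^-1: [set i | Z i == q].
  by rewrite card_preimset //; apply: perm_inj.
by apply/setP => i; rewrite !inE ffunE.
Qed.

Lemma avg_assigned q i : avg A (assigned q i) = (nq q)%:R / n%:R.
Proof.
have avg_any j : avg A (assigned q j) = avg A (assigned q i).
  rewrite [RHS](avg_crfe_perm (tperm i j)); apply: eq_avg => Z _.
  by rewrite /assigned ffunE tpermL.
have : \sum_j avg A (assigned q j) = (nq q)%:R.
  rewrite -avg_sum (@eq_avg _ _ _ _ (fun=> (nq q)%:R)); last exact: sum_assigned.
  exact: avg_cst crfe_card_gt0 _.
under eq_bigr do rewrite avg_any.
rewrite sumr_const card_ord => <-.
by rewrite -[_ *+ n]mulr_natr mulfK // pnatr_eq0 -lt0n (leq_ltn_trans _ (ltn_ord i)).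
Qed.

Lemma mul_assigned_same q q' i Z :
  assigned q i Z * assigned q' i Z = (q == q')%:R * assigned q i Z.
Proof.
by rewrite /assigned; case: (eqVneq (Z i) q) => [->|]; case: eqVneq => //;
   rewrite ?mulr0 ?mul0r ?mulr1.
Qed.

Lemma sum_assigned_pairs q q' Z : Z \in A ->
  \sum_i \sum_(j | j != i) assigned q i Z * assigned q' j Z
  = (nq q)%:R * ((nq q')%:R - (q == q')%:R).
Proof.
move=> ZA; transitivity (\sum_i assigned q i Z * ((nq q')%:R - assigned q' i Z)).
  apply: eq_bigr => i _; rewrite -mulr_sumr -(sum_assigned q' ZA).
  by rewrite [X in _ = _ * (X - _)](bigD1 i) //= addrC addrK.
under eq_bigr do rewrite mulrBr mul_assigned_same.
by rewrite sumrB -mulr_suml -mulr_sumr sum_assigned //; ring.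
Qed.

Lemma avg_assigned2 q q' i j : i != j ->
  avg A (fun Z => assigned q i Z * assigned q' j Z)
  = (nq q)%:R * ((nq q')%:R - (q == q')%:R) / (n%:R * (n.-1)%:R).
Proof.
move=> nij.
have n_gt1 : (1 < n)%N by rewrite -[n]card_ord; apply/card_gt1P; exists i, j.
have avg_any i' j' : i' != j' ->
    avg A (fun Z => assigned q i' Z * assigned q' j' Z)
    = avg A (fun Z => assigned q i Z * assigned q' j Z).
  move=> nij'; have [s [si' sj']] := perm2_transitive nij' nij.
  rewrite [RHS](avg_crfe_perm s); apply: eq_avg => Z _.
  by rewrite /assigned !ffunE si' sj'.
have : \sum_i' \sum_(j' | j' != i') avg A (fun Z => assigned q i' Z * assigned q' j' Z)
       = (nq q)%:R * ((nq q')%:R - (q == q')%:R).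
  under eq_bigr do rewrite -avg_sum.
  rewrite -avg_sum (@eq_avg _ _ _ _ (fun=> (nq q)%:R * ((nq q')%:R - (q == q')%:R))).
    exact: avg_cst crfe_card_gt0 _.
  exact: sum_assigned_pairs.
under eq_bigr => i' _ do under eq_bigr => j' nj do rewrite avg_any 1?eq_sym //.
have card_neq i' : #|[pred j' : 'I_n | j' != i']| = n.-1.
  by rewrite cardC1 card_ord.
under eq_bigr do rewrite sumr_const card_neq.
rewrite sumr_const card_ord -mulrnA => <-.
rewrite mulnC -[_ *+ _]mulr_natr natrM mulfK // mulf_neq0 // pnatr_eq0 -lt0n.
  exact: ltnW.
by rewrite -ltnS prednK // ltnW.
Qed.

Definition popmean (u : 'I_n -> R) : R := n%:R^-1 * \sum_i u i.

Definition popcov (u w : 'I_n -> R) : R :=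
  (n.-1)%:R^-1 * \sum_i (u i - popmean u) * (w i - popmean w).

Definition grpmean (u : 'I_n -> R) (q : 'I_Q) (Z : T) : R :=
  (nq q)%:R^-1 * \sum_i u i * assigned q i Z.

Definition contrast (a : 'I_Q -> R) (u : 'I_Q -> 'I_n -> R) (Z : T) : R :=
  \sum_q a q * grpmean (u q) q Z.

Hypothesis nq_gt0 : forall q, (0 < nq q)%N.
Hypothesis n_gt1 : (1 < n)%N.

Let nq_neq0 q : (nq q)%:R != 0 :> R.
Proof. by rewrite pnatr_eq0 -lt0n. Qed.

Let n_neq0 : n%:R != 0 :> R.
Proof. by rewrite pnatr_eq0 -lt0n ltnW. Qed.

Let natr_npred : (n.-1)%:R = n%:R - 1 :> R.
Proof. by rewrite -subn1 natrB // ltnW. Qed.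

Let n_sub1_neq0 : n%:R - 1 != 0 :> R.
Proof. by rewrite -natr_npred pnatr_eq0 -lt0n -ltnS prednK // ltnW. Qed.

Lemma sum_sub_popmean u : \sum_i (u i - popmean u) = 0.
Proof.
by rewrite sumrB sumr_const card_ord /popmean -[_ *+ n]mulr_natl mulVKf // subrr.
Qed.

Lemma avg_grpmean u q : avg A (grpmean u q) = popmean u.
Proof.
rewrite avgZ avg_sum; under eq_bigr => i _ do rewrite avgZ avg_assigned.
by rewrite -mulr_suml mulrCA mulKf // mulrC.
Qed.

Lemma grpmean_sub_popmean u q Z : Z \in A ->
  grpmean u q Z - popmean u = grpmean (fun i => u i - popmean u) q Z.
Proof.
move=> ZA; rewrite /grpmean; under [in RHS]eq_bigr do rewrite mulrBl.
by rewrite sumrB -mulr_sumr sum_assigned // mulrBr mulrCA mulVf ?mulr1.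
Qed.

Lemma covar_grpmean u w q q' :
  covar A (grpmean u q) (grpmean w q')
  = ((q == q')%:R / (nq q)%:R - n%:R^-1) * popcov u w.
Proof.
have avg_pair i j : avg A (fun Z => assigned q i Z * assigned q' j Z)
    = if i == j then (q == q')%:R * (nq q)%:R / n%:R
      else (nq q)%:R * ((nq q')%:R - (q == q')%:R) / (n%:R * (n.-1)%:R).
  case: eqVneq => [<-|nij]; last exact: avg_assigned2.
  rewrite -mulrA -(avg_assigned q i) -avgZ; apply: eq_avg => Z _.
  exact: mul_assigned_same.
rewrite /covar !avg_grpmean (@eq_avg _ _ _ _ (fun Z =>
    (nq q)%:R^-1 * (nq q')%:R^-1 *
    \sum_i \sum_j (u i - popmean u) * (w j - popmean w)
                  * (assigned q i Z * assigned q' j Z))); last first.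
  move=> Z ZA; rewrite !grpmean_sub_popmean // mulrACA mulr_suml; congr (_ * _).
  by apply: eq_bigr => i _; rewrite mulr_sumr; apply: eq_bigr => j _; ring.
rewrite avgZ avg_sum; under eq_bigr => i _ do rewrite avg_sum.
under eq_bigr => i _ do under eq_bigr => j _ do rewrite avgZ avg_pair.
rewrite sum_mul_diag_offdiag sum_sub_popmean mulr0 mul0r addr0 /popcov.
rewrite natr_npred; case: eqVneq => [<-|_] /=; field.
  by rewrite n_sub1_neq0 n_neq0 nq_neq0.
by rewrite n_sub1_neq0 n_neq0 !nq_neq0.
Qed.

Lemma avg_contrast a u : avg A (contrast a u) = \sum_q a q * popmean (u q).
Proof. by rewrite avg_sum; apply: eq_bigr => q _; rewrite avgZ avg_grpmean. Qed.

Lemma covar_contrast a a' u w : \sum_q a' q = 0 ->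
  covar A (contrast a u) (contrast a' (fun=> w))
  = \sum_q a q * a' q / (nq q)%:R * popcov (u q) w.
Proof.
move=> sum_a'; rewrite covar_suml; apply: eq_bigr => q _.
rewrite covar_sumr; under eq_bigr do rewrite covar_grpmean mulrBl mulrBr.
rewrite sumrB -mulr_suml sum_a' mul0r subr0 (bigD1 q) //= eqxx big1 ?addr0.
  by rewrite mul1r !mulrA.
by move=> q' /negPf; rewrite eq_sym => ->; rewrite mul0r mul0r mulr0.
Qed.

End CompletelyRandomized.

Section SelectionMatrices.
Variables (R : fieldType) (F : nat).
Implicit Types I J : {set 'I_F}.

Definition selmx I : 'M[R]_(#|I|, F) := rowsub (fun i : 'I_#|I| => enum_val i) 1%:M.

Lemma subcolE I (v : 'cV[R]_F) : subcol I v = selmx I *m v.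
Proof. by rewrite /selmx -rowsubE; apply/matrixP => i j; rewrite !mxE (ord1 j). Qed.

Lemma trmx_selmx I : (selmx I)^T = colsub (fun i : 'I_#|I| => enum_val i) 1%:M.
Proof. by apply/matrixP => i j; rewrite !mxE eq_sym. Qed.

Lemma submE I J (M : 'M[R]_F) : subm I J M = selmx I *m M *m (selmx J)^T.
Proof.
rewrite trmx_selmx mulmx_colsub mulmx1 /selmx -rowsubE.
by apply/matrixP => i j; rewrite !mxE.
Qed.

Lemma selmx_mul_tr I : selmx I *m (selmx I)^T = 1%:M.
Proof.
rewrite trmx_selmx mulmx_colsub mulmx1.
by apply/matrixP => i j; rewrite !mxE (inj_eq enum_val_inj).
Qed.

Lemma selmx_subset I J : I \subset J -> selmx I *m (selmx J)^T *m selmx J = selmx I.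
Proof.
move=> sIJ; have inJ (i : 'I_#|I|) : enum_val i \in J by apply/(subsetP sIJ)/enum_valP.
have -> : selmx I = rowsub (fun i => enum_rank_in (inJ i) (enum_val i)) (selmx J).
  by apply/matrixP => i j; rewrite !mxE enum_rankK_in.
by rewrite mul_rowsub_mx selmx_mul_tr mul_rowsub_mx mul1mx.
Qed.

Lemma selmx0 : selmx set0 = 0.
Proof. by apply/matrixP => -[i lt_i]; exfalso; move: lt_i; rewrite cards0. Qed.

End SelectionMatrices.

Section SchurResidual.
Variables (R : fieldType) (F : nat) (B : 'M[R]_F).
Implicit Types I J : {set 'I_F}.

Definition residmx I J : 'M[R]_(#|I|, F) :=
  selmx R I - subm I J B *m invmx (subm J J B) *m selmx R J.

Lemma residmx_set0 I : residmx I set0 = selmx R I.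
Proof. by rewrite /residmx selmx0 mulmx0 subr0. Qed.

Lemma subm_unitmx I :
  (forall w : 'rV_F, w *m B *m w^T = 0 -> w = 0) -> subm I I B \in unitmx.
Proof.
move=> B_posdef; rewrite -row_free_unit; apply: inj_row_free => v.
rewrite submE !mulmxA => vB0.
have /B_posdef w0 : (v *m selmx R I) *m B *m (v *m selmx R I)^T = 0.
  by rewrite trmx_mul !mulmxA vB0 mul0mx.
by rewrite -[v]mulmx1 -(selmx_mul_tr R I) mulmxA w0 mul0mx.
Qed.

Lemma residmx_mul_tr_selmx I J : subm J J B \in unitmx ->
  residmx I J *m B *m (selmx R J)^T = 0.
Proof.
move=> BJ_unit; rewrite /residmx !mulmxBl -submE -!mulmxA.
by rewrite [selmx R J *m _]mulmxA -submE mulVmx // mulmx1 subrr.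
Qed.

Lemma residmx_orthogonal I J I' J' : B^T = B -> subm J' J' B \in unitmx ->
  I :|: J \subset J' -> residmx I J *m B *m (residmx I' J')^T = 0.
Proof.
move=> BT BJ'_unit; rewrite subUset => /andP [sIJ' sJJ'].
have -> : residmx I J = residmx I J *m (selmx R J')^T *m selmx R J'.
  rewrite /residmx !mulmxBl selmx_subset // -!mulmxA.
  by rewrite [selmx R J *m _]mulmxA selmx_subset.
rewrite -!mulmxA; have -> : selmx R J' *m (B *m (residmx I' J')^T)
                         = (residmx I' J' *m B *m (selmx R J')^T)^T.
  by rewrite !trmx_mul trmxK BT.
by rewrite residmx_mul_tr_selmx // trmx0 !mulmx0.
Qed.

End SchurResidual.

Section FactorialEffects.
Variables (R : realFieldType) (K : nat).
Local Notation Q := (2 ^ K)%N.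
Local Notation F := (2 ^ K).-1.
Variables (iota : 'I_Q -> 'I_K -> bool) (eff : 'I_F -> {set 'I_K}).
Local Notation g := (gfq R iota eff).
Local Notation b := (bvec R iota eff).
Hypothesis iota_bij : bijective (fun q : 'I_Q => [ffun k => iota q k]).
Hypothesis eff_inj : injective eff.
Hypothesis eff_neq0 : forall f, eff f != set0.

Lemma sum_prod_levels (G : 'I_K -> bool -> R) :
  \sum_q \prod_k G k (iota q k) = \prod_k (G k true + G k false).
Proof.
under [RHS]eq_bigr do rewrite -big_bool.
rewrite bigA_distr_bigA /= (reindex _ (onW_bij _ iota_bij)) /=.
by apply: eq_bigr => q _; apply: eq_bigr => k _; rewrite ffunE.
Qed.

Lemma gfqE f q : g f q = \prod_k (if k \in eff f then lev R (iota q k) else 1).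
Proof. by rewrite /gfq big_mkcond. Qed.

Lemma sum_gfq f : \sum_q g f q = 0.
Proof.
under eq_bigr do rewrite gfqE.
rewrite (sum_prod_levels (fun k l => if k \in eff f then lev R l else 1)).
have /set0Pn [k k_f] := eff_neq0 f.
by rewrite (bigD1 k) //= k_f /lev subrr mul0r.
Qed.

Lemma sum_gfq_mul f f' : \sum_q g f q * g f' q = (f == f')%:R * Q%:R.
Proof.
under eq_bigr do rewrite !gfqE -big_split /=.
rewrite (sum_prod_levels (fun k l => (if k \in eff f then lev R l else 1)
                                   * (if k \in eff f' then lev R l else 1))).
have [<-|neq_ff'] := eqVneq f f'.
  rewrite mul1r natrX -[X in _ ^+ X]card_ord -prodr_const; apply: eq_bigr => k _.
  by case: (k \in eff f); rewrite /lev ?mulr1 ?mulrNN ?mul1r.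
have [k k_sep] : exists k, (k \in eff f) != (k \in eff f').
  apply/existsP; rewrite -negb_forall; apply: contra neq_ff' => /forallP eq_k.
  by apply/eqP/eff_inj/setP => k; apply/eqP.
rewrite mul0r (bigD1 k) //=.
by move: k_sep; case: (k \in eff f); case: (k \in eff f') => // _;
   rewrite /lev ?mulr1 ?mul1r subrr mul0r.
Qed.

Lemma sum_bvec : \sum_q b q = 0.
Proof.
apply/matrixP => f j; rewrite summxE !mxE.
by under eq_bigr do rewrite mxE; rewrite sum_gfq.
Qed.

Lemma sum_bvec_mul_tr : \sum_q b q *m (b q)^T = Q%:R%:M.
Proof.
apply/matrixP => f f'; rewrite summxE !mxE.
under eq_bigr do rewrite !mxE big_ord1 !mxE.
by rewrite sum_gfq_mul mulrC mulr_natr.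
Qed.

Variable nq : 'I_Q -> nat.
Local Notation Bt := (Btil R nq iota eff).

Lemma trmx_Btil : Bt^T = Bt.
Proof.
rewrite /Btil linearZ /= linear_sum /=; congr (_ *: _).
by apply: eq_bigr => q _; rewrite linearZ /= trmx_mul trmxK.
Qed.

Lemma Btil_quadratic (w : 'rV[R]_F) :
  (w *m Bt *m w^T) 0 0
  = 2%:R ^- (2 * K.-1) * \sum_q (nq q)%:R^-1 * ((w *m b q) 0 0) ^+ 2.
Proof.
rewrite /Btil -scalemxAr -scalemxAl mulmx_sumr mulmx_suml mxE summxE.
congr (_ * _); apply: eq_bigr => q _.
rewrite -scalemxAr -scalemxAl mxE !mulmxA -(mulmxA (w *m b q)) -trmx_mul mxE.
by rewrite big_ord1 mxE expr2 !mxE.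
Qed.

Hypothesis nq_gt0 : forall q, (0 < nq q)%N.

Lemma Btil_posdef (w : 'rV[R]_F) : w *m Bt *m w^T = 0 -> w = 0.
Proof.
move=> /matrixP /(_ 0 0); rewrite Btil_quadratic mxE => /eqP.
rewrite mulf_eq0 invr_eq0 expf_eq0 pnatr_eq0 andbF /= => /eqP sum0.
have term_ge0 q : true -> 0 <= (nq q)%:R^-1 * ((w *m b q) 0 0) ^+ 2 :> R.
  by move=> _; rewrite mulr_ge0 ?invr_ge0 ?ler0n ?sqr_ge0.
have wb0 q : w *m b q = 0.
  have /eqP := psumr_eq0P term_ge0 sum0 (i := q) isT.
  rewrite mulf_eq0 invr_eq0 pnatr_eq0 eqn0Ngt nq_gt0 sqrf_eq0 /= => /eqP wbq.
  by apply/matrixP => i j; rewrite !ord1 wbq mxE.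
have : w *m \sum_q b q *m (b q)^T = 0.
  by rewrite mulmx_sumr big1 // => q _; rewrite mulmxA wb0 mul0mx.
rewrite sum_bvec_mul_tr mul_mx_scalar => /eqP.
by rewrite scalemx_eq0 pnatr_eq0 expn_eq0 /= => /eqP.
Qed.

End FactorialEffects.

Lemma Fbefore_eq0 (K H : nat) (tier : 'I_(2 ^ K).-1 -> 'I_H) (h : 'I_H) :
  val h = 0%N -> Fbefore tier h = set0.
Proof. by move=> h0; apply/setP => f; rewrite !inE h0. Qed.

Lemma Ftier_Fbefore_subset (K H : nat) (tier : 'I_(2 ^ K).-1 -> 'I_H) (h h' : 'I_H) :
  (h < h')%N -> Ftier tier h :|: Fbefore tier h \subset Fbefore tier h'.
Proof.
move=> lt_hh'; apply/subsetP => f; rewrite !inE => /orP [/eqP -> //|].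
by move/ltn_trans; apply.
Qed.

Section TieredContrasts.
Variables (R : realFieldType) (K H : nat).
Local Notation Q := (2 ^ K)%N.
Local Notation F := (2 ^ K).-1.
Variables (iota : 'I_Q -> 'I_K -> bool) (eff : 'I_F -> {set 'I_K}).
Variables (nq : 'I_Q -> nat) (tier : 'I_F -> 'I_H).
Local Notation b := (bvec R iota eff).
Local Notation Bt := (Btil R nq iota eff).
Local Notation c q h := (cvec R nq iota eff tier q h).
Local Notation P h := (residmx Bt (Ftier tier h) (Fbefore tier h)).
Hypothesis iota_bij : bijective (fun q : 'I_Q => [ffun k => iota q k]).
Hypothesis eff_inj : injective eff.
Hypothesis eff_neq0 : forall f, eff f != set0.
Hypothesis nq_gt0 : forall q, (0 < nq q)%N.

Lemma cvecE q h : c q h = P h *m b q.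
Proof.
rewrite /cvec; case: eqP => [/Fbefore_eq0 -> | _].
  by rewrite residmx_set0 subcolE.
by rewrite /residmx !subcolE mulmxBl -!mulmxA.
Qed.

Lemma sum_cvec h : \sum_q c q h = 0.
Proof.
under eq_bigr do rewrite cvecE.
by rewrite -mulmx_sumr sum_bvec // mulmx0.
Qed.

Lemma residmx_tier_orthogonal h h' : h != h' -> P h *m Bt *m (P h')^T = 0.
Proof.
have orth_lt (h1 h2 : 'I_H) : (h1 < h2)%N -> P h1 *m Bt *m (P h2)^T = 0.
  move=> lt_h12; apply: residmx_orthogonal (trmx_Btil _ _ _ _) _ _.
    exact/subm_unitmx/Btil_posdef.
  exact: Ftier_Fbefore_subset.
move=> neq_hh'; case: (ltngtP h h') => [lt_hh' | lt_h'h | /val_inj eq_hh'].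
- exact: orth_lt.
- have -> : P h *m Bt *m (P h')^T = (P h' *m Bt *m (P h)^T)^T.
    by rewrite !trmx_mul trmxK trmx_Btil mulmxA.
  by rewrite orth_lt ?trmx0.
- by rewrite eq_hh' eqxx in neq_hh'.
Qed.

Lemma sum_cvec_orthogonal h h' : h != h' ->
  \sum_q (nq q)%:R^-1 *: (c q h *m (c q h')^T) = 0.
Proof.
move=> neq_hh'.
have -> : \sum_q (nq q)%:R^-1 *: (c q h *m (c q h')^T)
          = 2%:R ^+ (2 * K.-1) *: (P h *m Bt *m (P h')^T).
  rewrite /Btil -scalemxAr -scalemxAl scalerA mulfV ?expf_neq0 ?pnatr_eq0 // scale1r.
  rewrite mulmx_sumr mulmx_suml; apply: eq_bigr => q _.
  by rewrite !cvecE trmx_mul -scalemxAr -scalemxAl !mulmxA.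
by rewrite residmx_tier_orthogonal // scaler0.
Qed.

End TieredContrasts.

Lemma mxtens_unindex_cast_muln1 (m : nat) (e : m = (m * 1)%N) (i : 'I_m) :
  (mxtens_unindex (cast_ord e i)).1 = i.
Proof. by apply: val_inj; rewrite /= divn1. Qed.

Section Estimators.
Variables (R : realFieldType) (K n L H : nat).
Local Notation Q := (2 ^ K)%N.
Local Notation F := (2 ^ K).-1.
Variables (iota : 'I_Q -> 'I_K -> bool) (eff : 'I_F -> {set 'I_K}).
Variables (Y : 'I_n -> 'I_Q -> R) (x : 'I_n -> 'cV[R]_L).
Variables (nq : 'I_Q -> nat) (tier : 'I_F -> 'I_H).
Local Notation A := (crfe n nq).
Local Notation s := (2%:R ^- K.-1 : R).
Local Notation c q h := (cvec R nq iota eff tier q h).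
Local Notation tauhatc Z := (tauhat Y nq iota eff Z - tau Y iota eff).
Local Notation theta h := (thetahat x nq iota eff tier h).
Local Notation Yq q := (fun i => Y i q).
Local Notation xl l := (fun i => x i l 0).
Hypothesis iota_bij : bijective (fun q : 'I_Q => [ffun k => iota q k]).
Hypothesis eff_inj : injective eff.
Hypothesis eff_neq0 : forall f, eff f != set0.
Hypothesis nq_gt0 : forall q, (0 < nq q)%N.
Hypothesis nq_sum : (\sum_(q < Q) nq q)%N = n.
Hypothesis n_gt1 : (1 < n)%N.

Let s_mul_s : s * s = 2%:R ^- (2 * K.-1).
Proof. by rewrite -invfM -exprD addnn -mul2n. Qed.

Lemma YhatE Z q : Yhat Y nq Z q = grpmean nq (Yq q) q Z.
Proof.
rewrite /Yhat /grpmean big_mkcond; congr (_ * _); apply: eq_bigr => i _.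
by rewrite /assigned; case: eqP => [->|_]; rewrite ?mulr1 ?mulr0.
Qed.

Lemma xhatE Z q l : xhat x nq Z q l 0 = grpmean nq (xl l) q Z.
Proof.
rewrite /xhat /grpmean mxE summxE big_mkcond; congr (_ * _).
apply: eq_bigr => i _.
by rewrite /assigned; case: (Z i == q); rewrite ?mulr1 ?mulr0.
Qed.

Lemma tauhatc_entry Z f : tauhatc Z f 0
  = contrast nq (fun q => s * gfq R iota eff f q) (fun q => Yq q) Z
    - \sum_q s * gfq R iota eff f q * popmean (Yq q).
Proof.
rewrite /tauhat /tau !mxE !summxE !mulr_sumr.
congr (_ - _); apply: eq_bigr => q _.
  by rewrite !mxE YhatE [_ * gfq _ _ _ _ _]mulrC mulrA.
by rewrite !mxE [_ * gfq _ _ _ _ _]mulrC mulrA.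
Qed.

Lemma thetahat_entry h Z k : theta h Z k 0
  = contrast nq (fun q => s * c q h (mxtens_unindex k).1 0)
                (fun=> xl (mxtens_unindex k).2) Z.
Proof.
rewrite /thetahat mxE summxE mulr_sumr; apply: eq_bigr => q _.
by rewrite mxE !ord1 xhatE mulrA.
Qed.

Lemma sum_scaled_cvec h i : \sum_q s * c q h i 0 = 0.
Proof. by rewrite -mulr_sumr -summxE sum_cvec // mxE mulr0. Qed.

Lemma SqxE q l : Sqx Y x q 0 l = popcov (Yq q) (xl l).
Proof.
rewrite /Sqx /popcov mxE summxE; congr (_ * _); apply: eq_bigr => i _.
by rewrite !mxE summxE.
Qed.

Lemma SxxE l l' : Sxx x l l' = popcov (xl l) (xl l').
Proof.
rewrite /Sxx /popcov mxE summxE; congr (_ * _); apply: eq_bigr => i _.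
by rewrite !mxE big_ord1 !mxE !summxE.
Qed.

Lemma Ex_tauhat_centered : Ex A (fun Z => tauhatc Z) = 0.
Proof.
apply/matrixP => f j; rewrite !ord1 ExE mxE.
under eq_avg do rewrite tauhatc_entry.
by rewrite avgD avg_cst ?crfe_card_gt0 // avg_contrast // subrr.
Qed.

Lemma Ex_thetahat h : Ex A (theta h) = 0.
Proof.
apply/matrixP => k j; rewrite !ord1 ExE mxE.
under eq_avg do rewrite thetahat_entry.
by rewrite avg_contrast // -mulr_suml sum_scaled_cvec mul0r.
Qed.

Lemma covar_thetahat_entry h h' k k' :
  covar A (fun Z => theta h Z k 0) (fun Z => theta h' Z k' 0)
  = 2%:R ^- (2 * K.-1)
    * \sum_q c q h (mxtens_unindex k).1 0 * c q h' (mxtens_unindex k').1 0 / (nq q)%:R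
              * popcov (xl (mxtens_unindex k).2) (xl (mxtens_unindex k').2).
Proof.
rewrite (eq_covar (fun Z _ => thetahat_entry Z k) (fun Z _ => thetahat_entry Z k')).
rewrite covar_contrast ?sum_scaled_cvec // -s_mul_s mulr_sumr.
by apply: eq_bigr => q _; ring.
Qed.

Lemma Cov_tauhat_thetahat h :
  Cov A (fun Z => tauhatc Z) (theta h)
  = castmx (muln1 _, erefl _) (Wtx Y x nq iota eff tier h).
Proof.
apply/matrixP => f k; rewrite CovE castmxE.
rewrite (eq_covar (fun Z _ => tauhatc_entry Z f) (fun Z _ => thetahat_entry Z k)).
rewrite covarDl_cst ?crfe_card_gt0 // covar_contrast ?sum_scaled_cvec //.
rewrite /Wtx mxE summxE mulr_sumr; apply: eq_bigr => q _.
rewrite mxE [(_ *t _) _ _]mxE mxtens_unindex_cast_muln1 cast_ord_id !ord1 SqxE.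
rewrite mxE big_ord1 !mxE -s_mul_s; ring.
Qed.

Lemma Cov_thetahat h : Cov A (theta h) (theta h) = Wxx x nq iota eff tier h.
Proof.
apply/matrixP => k k'; rewrite CovE covar_thetahat_entry /Wxx mxE summxE.
congr (_ * _); apply: eq_bigr => q _.
rewrite mxE [(_ *t _) _ _]mxE SxxE mxE big_ord1 !mxE; ring.
Qed.

Lemma Cov_thetahat_orthogonal h h' : h != h' -> Cov A (theta h) (theta h') = 0.
Proof.
move=> neq_hh'; apply/matrixP => k k'; rewrite CovE covar_thetahat_entry mxE.
set i := (mxtens_unindex k).1; set i' := (mxtens_unindex k').1.
have /matrixP /(_ i i') := sum_cvec_orthogonal R tier iota_bij eff_inj nq_gt0 neq_hh'.
rewrite summxE => orth; rewrite -mulr_suml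
  (eq_bigr (fun q => ((nq q)%:R^-1 *: (c q h *m (c q h')^T)) i i')).
  by rewrite orth mxE mul0r mulr0.
by move=> q _; rewrite !mxE big_ord1 !mxE mulrC.
Qed.

End Estimators.

Theorem proposition6 (R : realFieldType) (K n L H : nat)
  (iota : 'I_(2 ^ K) -> 'I_K -> bool)
  (eff : 'I_(2 ^ K).-1 -> {set 'I_K})
  (Y : 'I_n -> 'I_(2 ^ K) -> R) (x : 'I_n -> 'cV[R]_L)
  (nq : 'I_(2 ^ K) -> nat)
  (tier : 'I_(2 ^ K).-1 -> 'I_H) :
  (1 <= K)%N ->
  (* iota is a bijection of the combinations onto {-1,+1}^K *)
  bijective (fun q : 'I_(2 ^ K) => [ffun k => iota q k]) ->
  (* eff enumerates the nonempty subsets of the factors *)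
  injective eff ->
  (forall f, eff f != set0) ->
  (forall A : {set 'I_K}, A != set0 -> exists f, eff f = A) ->
  (* CRFE group sizes *)
  (forall q, (1 <= nq q)%N) ->
  (\sum_(q < 2 ^ K) nq q)%N = n ->
  (* tiers F_h = {f | tier f = h} are nonempty *)
  (forall h : 'I_H, exists f, tier f = h) ->
  let A := crfe n nq in
  let tauhatc := fun Z => tauhat Y nq iota eff Z - tau Y iota eff in
  [/\ Ex A tauhatc = 0,
      forall h : 'I_H, Ex A (thetahat x nq iota eff tier h) = 0,
      forall h : 'I_H,
        Cov A tauhatc (thetahat x nq iota eff tier h)
        = castmx (muln1 _, erefl _) (Wtx Y x nq iota eff tier h),
      forall h : 'I_H,
        Cov A (thetahat x nq iota eff tier h) (thetahat x nq iota eff tier h)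
        = Wxx x nq iota eff tier h
    & forall h h' : 'I_H, h != h' ->
        Cov A (thetahat x nq iota eff tier h) (thetahat x nq iota eff tier h')
        = 0].
Proof.
move=> K_gt0 iota_bij eff_inj eff_neq0 _ nq_gt0 nq_sum _ A tauhatc.
have n_gt1 : (1 < n)%N.
  rewrite -nq_sum (@leq_trans (2 ^ K)) ?(ltn_exp2l 0) //.
  by rewrite -[X in (X <= _)%N]card_ord -sum1_card leq_sum.
split=> [|h|h|h|h h' neq_hh'].
- by apply: Ex_tauhat_centered.
- by apply: Ex_thetahat.
- by apply: Cov_tauhat_thetahat.
- by apply: Cov_thetahat.
- by apply: Cov_thetahat_orthogonal.
Qed.
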